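(* Let $X$ be a continuous vector field on $\mathbb{S}^1$ of finite width, and let $\lambda^\pm$ be the infinitesimal earthquake measure of $\mathcal{E}_X^\pm$. Then $\lVert\lambda^\pm\rVert_{\mathrm{Th}}\le\frac{2\sqrt2}{1-\tanh(1)}w(X)$.
   Context: $\mathbb{R}^{1,2}$ is $\mathbb{R}^3$ with $\langle x,y\rangle=-x_0y_0+x_1y_1+x_2y_2$; $\mathbb{H}^2$ is identified with the Klein disk $\mathbb{D}^2$ via $\Pi(x_0,x_1,x_2)=(x_1/x_0,x_2/x_0)$, boundary $\mathbb{S}^1$. A vector field $X$ on $\mathbb{S}^1$ is $X(z)=iz\phi_X(z)$. $\phi_X^-(\eta)=\sup\{a(\eta):a\text{ affine},a|_{\mathbb{S}^1}\le\phi_X\}$, $\phi_X^+(\eta)=\inf\{a(\eta):a\text{ affine},a|_{\mathbb{S}^1}\ge\phi_X\}$, $\eta\in\overline{\mathbb{D}^2}$. Width $w(X)=\sup_{\eta\in\mathbb{D}^2}\frac{\phi_X^+(\eta)-\phi_X^-(\eta)}{\sqrt{1-|\eta|^2}}$. $\Sigma^-(\eta)$ is the set of $\sigma\in\mathbb{R}^{1,2}$ with $\langle(1,\xi),\sigma\rangle\le\phi_X^-(\xi)$ for all $\xi\in\mathbb{D}^2$ and equality at $\eta$; $\Sigma^+(\eta)$ likewise with $\ge\phi_X^+$. $\mathcal{E}_X^\pm(\eta)=\mathrm{d}_{(1,\eta)}\Pi((1,\eta)\boxtimes\sigma^\pm(\eta))$, where $\langle x\boxtimes y,v\rangle=\det(x,y,v)$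 and $\sigma^\pm(\eta)$ is the single point or the midpoint of the segment $\Sigma^\pm(\eta)$; these are the left/right infinitesimal earthquakes extending $X$. Their geodesic laminations $\lambda^\pm$ are the connected components of $S^\pm(\sigma)\setminus\mathrm{Int}S^\pm(\sigma)$, $S^\pm(\sigma)=\{\eta\in\mathbb{D}^2:\phi^\pm_X(\eta)=\langle(1,\eta),\sigma\rangle\}$, over all $\sigma$ lying in some $\Sigma^\pm(\eta)$. The infinitesimal earthquake (bending) measure: for an arc $c:[0,1]\to\mathbb{D}^2$, $\lambda^\pm(c)=\inf\sum_{i=0}^{n-1}\sqrt{\langle\sigma_i-\sigma_{i+1},\sigma_i-\sigma_{i+1}\rangle}$ over $0=t_0<\dots<t_n=1$ and $\sigma_i\in\Sigma^\pm(c(t_i))$. Thurston norm $\lVert\lambda\rVert_{\mathrm{Th}}=\sup_I\lambda(I)$ over geodesic segments $I$ of hyperbolic length $1$ transverse to the support of $\lambda$. *)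

From HB Require Import structures.
From mathcomp Require Import all_boot all_order all_algebra.
From mathcomp Require Import all_classical all_reals all_analysis.
Set Implicit Arguments. Unset Strict Implicit. Unset Printing Implicit Defensive.
Import Order.TTheory GRing.Theory Num.Theory.
Import numFieldNormedType.Exports.
Local Open Scope classical_set_scope.
Local Open Scope ring_scope.

Section Defs.
Variable R : realType.

Definition sqn (p : R * R) : R := p.1 ^+ 2 + p.2 ^+ 2.
Definition on_circle (z : R * R) : Prop := sqn z = 1.
Definition in_disk (p : R * R) : Prop := sqn p < 1.

(* A vector field X(z) = i z phi(z) on S^1 is encoded by phi : R*R -> R;
   only its values on S^1 matter. *)

Definition aff (c b1 b2 : R) (p : R * R) : R := c + b1 * p.1 + b2 * p.2.

Definition phi_minus (phi : R * R -> R) (eta : R * R) : R :=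
  sup [set y | exists c b1 b2,
        (forall z, on_circle z -> aff c b1 b2 z <= phi z) /\ y = aff c b1 b2 eta].

Definition phi_plus (phi : R * R -> R) (eta : R * R) : R :=
  inf [set y | exists c b1 b2,
        (forall z, on_circle z -> phi z <= aff c b1 b2 z) /\ y = aff c b1 b2 eta].

Definition phi_pm (pm : bool) phi := if pm then phi_plus phi else phi_minus phi.

Definition width (phi : R * R -> R) : \bar R :=
  ereal_sup [set ((phi_plus phi eta - phi_minus phi eta)
                   / Num.sqrt (1 - sqn eta))%:E | eta in in_disk].

Definition mink (x y : R * R * R) : R :=
  - (x.1.1 * y.1.1) + x.1.2 * y.1.2 + x.2 * y.2.
Definition sub3 (x y : R * R * R) : R * R * R :=
  (x.1.1 - y.1.1, x.1.2 - y.1.2, x.2 - y.2).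
Definition lift (p : R * R) : R * R * R := (1, p.1, p.2).

Definition Sigma (pm : bool) (phi : R * R -> R) (eta : R * R) : set (R * R * R) :=
  [set s | (forall xi, in_disk xi ->
              if pm then phi_plus phi xi <= mink (lift xi) s
              else mink (lift xi) s <= phi_minus phi xi)
           /\ mink (lift eta) s = phi_pm pm phi eta].

Definition eq_measure (pm : bool) (phi : R * R -> R) (c : R -> R * R) : \bar R :=
  ereal_inf [set x | exists (n : nat) (t : nat -> R) (s : nat -> R * R * R),
     [/\ t 0%N = 0, t n = 1,
         (forall i, (i < n)%N -> t i < t i.+1),
         (forall i, (i <= n)%N -> Sigma pm phi (c (t i)) (s i)) &
         x = (\sum_(i < n) Num.sqrt (mink (sub3 (s i) (s i.+1))
                                         (sub3 (s i) (s i.+1))))%:E]].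

Definition Sset (pm : bool) (phi : R * R -> R) (s : R * R * R) : set (R * R) :=
  [set eta | in_disk eta /\ phi_pm pm phi eta = mink (lift eta) s].

Definition leaf (pm : bool) (phi : R * R -> R) (L : set (R * R)) : Prop :=
  exists s eta0 x, in_disk eta0 /\ Sigma pm phi eta0 s /\
    (Sset pm phi s `\` interior (Sset pm phi s)) x /\
    L = connected_component (Sset pm phi s `\` interior (Sset pm phi s)) x.

(* Euclidean segments = geodesic segments of the Klein model *)
Definition lin (p q : R * R) (t : R) : R * R :=
  ((1 - t) * p.1 + t * q.1, (1 - t) * p.2 + t * q.2).
Definition seg (p q : R * R) : set (R * R) := lin p q @` `[0, 1].

Definition cosh1 : R := (expR 1 + expR (-1)) / 2.
Definition tanh1 : R := (expR 1 - expR (-1)) / (expR 1 + expR (-1)).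

(* hyperbolic (Klein) distance between p and q equals 1:
   cosh d(p,q) = (1 - p.q) / sqrt((1-|p|^2)(1-|q|^2)) *)
Definition hyp_dist_one (p q : R * R) : Prop :=
  (1 - (p.1 * q.1 + p.2 * q.2)) / Num.sqrt ((1 - sqn p) * (1 - sqn q)) = cosh1.

Definition transverse (pm : bool) phi (I : set (R * R)) : Prop :=
  forall L, leaf pm phi L -> forall x y, I x -> I y -> L x -> L y -> x = y.

Definition thurston_norm (pm : bool) (phi : R * R -> R) : \bar R :=
  ereal_sup [set x | exists p q,
     [/\ in_disk p, in_disk q, hyp_dist_one p q, transverse pm phi (seg p q)
       & x = eq_measure pm phi (lin p q)]].

End Defs.

From Pilot Require Import Defs.
From HB Require Import structures.
From mathcomp Require Import all_boot all_order all_algebra.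
From mathcomp Require Import all_classical all_reals all_analysis.
From mathcomp Require Import ring lra.
Set Implicit Arguments.
Unset Strict Implicit.
Unset Printing Implicit Defensive.
Import Order.TTheory GRing.Theory Num.Theory.
Import numFieldNormedType.Exports.
Local Open Scope classical_set_scope.
Local Open Scope ring_scope.

(* Since phi^+ = - (-phi)^-, both measures reduce to lambda^-.  A compactness
   argument shows that every Sigma^-(eta) is nonempty, and the trivial
   partition bounds the measure of a segment [p, q] by the Minkowski length
   of s1 - s2 for s1 in Sigma^-(p), s2 in Sigma^-(q).  Let P, Q be the points
   of the hyperboloid over p and q.  For a future timelike X with P - X future
   timelike, the projections of X and P - X put p inside a chord of the disk;
   convexity of phi^-, concavity of phi^+ and phi^+ - phi^- <= w sqrt(1-|eta|^2)
   then give <X, s1 - s2> >= -w, and symmetrically <X, s1 - s2> <= w below Q.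
   Testing these two inequalities at two explicit vectors bounds the normal
   and the tangential component of s1 - s2 at Q, so that its length is at most
   43/6 w, and 43/6 <= 2 sqrt 2 / (1 - tanh 1) = sqrt 2 (e^2 + 1). *)

Section Numerics.
Variable R : realType.

Lemma expR1_bounds : 64/25 <= expR (1 : R) <= 3.
Proof.
have e8 : expR (1 : R) = expR (1/8) ^+ 8 by rewrite -expRM_natl; congr expR; field.
have lo : 9/8 <= expR (1/8 : R) by have := expR_ge1Dx (1/8 : R); lra.
have hi : expR (1/8 : R) <= 8/7.
  have := expR_ge1Dx (- (1/8) : R).
  have : expR (1/8 : R) * expR (- (1/8)) = 1 by rewrite -expRD subrr expR0.
  have := expR_gt0 (1/8 : R); nra.
rewrite e8; apply/andP; split.
- apply: (@le_trans _ _ ((9/8) ^+ 8)); first by rewrite !exprS expr0; lra.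
  by rewrite lerXn2r // ?nnegrE; lra.
- apply: (@le_trans _ _ ((8/7) ^+ 8)); last by rewrite !exprS expr0; lra.
  rewrite lerXn2r // ?nnegrE; last lra.
  exact: ltW (expR_gt0 _).
Qed.

Lemma cosh1_le : cosh1 R <= 9/5.
Proof.
have /andP[lo hi] := expR1_bounds.
have EF : expR 1 * expR (-1) = 1 :> R by rewrite -expRD subrr expR0.
have F_le : expR (-1) <= 25/64 :> R by have := expR_gt0 (-1 : R); nra.
rewrite /cosh1; lra.
Qed.

Lemma thurston_const_ge : 43/6 <= 2 * Num.sqrt 2 / (1 - tanh1 R).
Proof.
have /andP[lo _] := expR1_bounds.
set E := expR (1 : R) in lo *.
have E0 : 0 < E := expR_gt0 1.
have -> : 2 * Num.sqrt 2 / (1 - tanh1 R) = Num.sqrt 2 * (E ^+ 2 + 1).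
  rewrite /tanh1 expRN -/E; field.
  by rewrite !gt_eqF //; nra.
have s2 : 1 <= Num.sqrt (2 : R) by rewrite -[X in X <= _]sqrtr1 ler_sqrt; lra.
have E2 : 43/6 <= E ^+ 2 + 1 by rewrite expr2; nra.
apply: le_trans E2 _; rewrite -[X in X <= _]mul1r ler_wpM2r //.
by rewrite addr_ge0 ?sqr_ge0.
Qed.
End Numerics.

Section Minkowski.
Variable R : realType.
Implicit Types (P Q X Y Z s t : R * R * R) (k : R).

Lemma sub3E s t : sub3 s t = s - t.
Proof. by case: s t => [[? ?] ?] [[? ?] ?]. Qed.

Lemma scale3E k X : k *: X = (k * X.1.1, k * X.1.2, k * X.2).
Proof. by case: X => [[? ?] ?]. Qed.

Lemma minkC s t : mink s t = mink t s.
Proof. by rewrite /mink; ring. Qed.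

Lemma minkDl X Y t : mink (X + Y) t = mink X t + mink Y t.
Proof. by case: X Y => [[? ?] ?] [[? ?] ?]; rewrite /mink /=; ring. Qed.

Lemma minkZl k X t : mink (k *: X) t = k * mink X t.
Proof. by rewrite scale3E /mink /=; ring. Qed.

Lemma minkNl X t : mink (- X) t = - mink X t.
Proof. by rewrite -scaleN1r minkZl mulN1r. Qed.

Lemma minkDr X Y t : mink t (X + Y) = mink t X + mink t Y.
Proof. by rewrite !(minkC t) minkDl. Qed.

Lemma minkZr k X t : mink t (k *: X) = k * mink t X.
Proof. by rewrite !(minkC t) minkZl. Qed.

Lemma minkNr X t : mink t (- X) = - mink t X.
Proof. by rewrite !(minkC t) minkNl. Qed.

Definition minkE := (minkDl, minkDr, minkNl, minkNr, minkZl, minkZr).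

Definition future_timelike X := 0 < X.1.1 /\ mink X X < 0.

(* Reversed Cauchy-Schwarz inequality for timelike vectors. *)
Lemma future_timelike_of_mink Z P :
  future_timelike P -> mink Z Z < 0 -> mink Z P < 0 -> future_timelike Z.
Proof.
case: Z P => [[z0 z1] z2] [[p0 p1] p2] [/= p0_gt0 pP] zZ zP; split => //.
move: pP zZ zP; rewrite /mink /= => pP zZ zP.
rewrite ltNge; apply/negP => z0_le0.
have cs : (z1 * p1 + z2 * p2) ^+ 2 <= (z1 ^+ 2 + z2 ^+ 2) * (p1 ^+ 2 + p2 ^+ 2).
  by have := sqr_ge0 (z1 * p2 - z2 * p1); rewrite !expr2; nra.
have zp : (z1 ^+ 2 + z2 ^+ 2) * (p1 ^+ 2 + p2 ^+ 2) <= (z0 * p0) ^+ 2.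
  by rewrite exprMn !expr2; apply: ler_pM; nra.
have : z0 * p0 <= 0 by nra.
rewrite !expr2 in cs zp; nra.
Qed.

(* Write t = N u + b Q with u a unit vector orthogonal to Q.  The lower bound
   at 3/10 Q gives b <= 10/3 W; the upper bound at X / 4, where
   X = 5/3 Q + 4/3 u lies on the hyperboloid, gives 4/3 N - 5/3 b <= 4 W.
   Hence sqrt <t, t> <= N <= 3 W + 5/4 b <= 43/6 W.  The bound -9/5 on <P, Q>
   is what makes 3/10 Q lie below P. *)
Lemma mink_sqrt_le_of_cone_bounds W P Q t :
  0 <= W -> future_timelike P -> future_timelike Q ->
  mink P P = -1 -> mink Q Q = -1 -> - (9/5) <= mink P Q ->
  (forall X, future_timelike X -> future_timelike (P - X) -> - W <= mink X t) ->
  (forall X, future_timelike X -> future_timelike (Q - X) -> mink X t <= W) ->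
  Num.sqrt (mink t t) <= 43/6 * W.
Proof.
move=> W0 fP [Q0 _] PP QQ PQ lower upper.
have QP : mink Q P = mink P Q by rewrite minkC.
set b := - mink Q t.
have b_le : b <= 10/3 * W.
  suff : - W <= mink (3/10 *: Q) t by rewrite minkZl /b; lra.
  apply: lower; first by split; rewrite ?minkE /= ?QQ; [apply: mulr_gt0|lra].
  by apply: future_timelike_of_mink fP _ _; rewrite !minkE ?PP ?QQ ?QP; lra.
have [tt_le0|tt_gt0] := lerP (mink t t) 0.
  by rewrite (eqP (_ : Num.sqrt _ == 0)) ?sqrtr_eq0 // mulr_ge0.
pose v := t - b *: Q.
have vQ : mink v Q = 0 by rewrite /v /b !minkE QQ (minkC Q t); ring.
have vv : mink v v = mink t t + b ^+ 2 by rewrite /v /b !minkE QQ (minkC Q t); ring.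
have vt : mink v t = mink v v by rewrite /v /b !minkE QQ (minkC Q t); ring.
have vv_gt0 : 0 < mink v v by rewrite vv; have := sqr_ge0 b; lra.
set N := Num.sqrt (mink v v).
have N_gt0 : 0 < N by rewrite sqrtr_gt0.
have NN : N ^+ 2 = mink v v by rewrite sqr_sqrtr // ltW.
pose u := N^-1 *: v.
have uQ : mink u Q = 0 by rewrite /u minkZl vQ mulr0.
have uu : mink u u = 1 by rewrite /u minkZl minkZr -NN; field; rewrite gt_eqF.
have ut : mink u t = N by rewrite /u minkZl vt -NN; field; rewrite gt_eqF.
clearbody u.
pose X := 5/3 *: Q + 4/3 *: u.
have XX : mink X X = -1 by rewrite /X !minkE uu QQ uQ (minkC Q u) uQ; field.
have XQ : mink X Q = - (5/3) by rewrite /X !minkE uQ QQ; field.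
have Xt : mink X t = - (5/3) * b + 4/3 * N by rewrite /X !minkE ut /b; field.
clearbody X.
have : mink (1/4 *: X) t <= W.
  have XQ' : mink Q X = - (5/3) by rewrite minkC.
  have fQ : future_timelike Q by split; rewrite ?QQ ?ltrN10.
  apply: upper.
    by apply: future_timelike_of_mink fQ _ _; rewrite !minkE ?XX ?XQ; lra.
  by apply: future_timelike_of_mink fQ _ _; rewrite !minkE ?QQ ?XX ?XQ ?XQ'; lra.
rewrite minkZl Xt => XtW.
apply: (@le_trans _ _ N); last lra.
by rewrite ler_sqrt // vv; have := sqr_ge0 b; lra.
Qed.

End Minkowski.

Section KleinModel.
Variable R : realType.
Implicit Types (p q x y : R * R) (X Y : R * R * R).

Definition disk_sqrt p : R := Num.sqrt (1 - sqn p).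

(* [klein] is the projection Pi; [hyp_lift] is its inverse on the upper sheet
   of the hyperboloid [mink P P = -1]. *)
Definition hyp_lift p : R * R * R := (disk_sqrt p)^-1 *: Defs.lift p.
Definition klein X : R * R := (X.1.2 / X.1.1, X.2 / X.1.1).

Lemma disk_sqrt_gt0 p : in_disk p -> 0 < disk_sqrt p.
Proof. by rewrite /in_disk /disk_sqrt sqrtr_gt0 subr_gt0. Qed.

Lemma sqr_disk_sqrt p : in_disk p -> disk_sqrt p ^+ 2 = 1 - sqn p.
Proof. by move=> pD; rewrite sqr_sqrtr // subr_ge0 ltW. Qed.

Lemma mink_lift p q : mink (Defs.lift p) (Defs.lift q) = - (1 - (p.1 * q.1 + p.2 * q.2)).
Proof. by rewrite /mink /=; ring. Qed.

Lemma hyp_lift_norm p : in_disk p -> mink (hyp_lift p) (hyp_lift p) = -1.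
Proof.
move=> pD; have s_gt0 := disk_sqrt_gt0 pD.
rewrite minkZl minkZr mink_lift.
have -> : p.1 * p.1 + p.2 * p.2 = 1 - disk_sqrt p ^+ 2.
  by rewrite sqr_disk_sqrt // /sqn !expr2; ring.
by field; rewrite gt_eqF.
Qed.

Lemma hyp_lift_future p : in_disk p -> future_timelike (hyp_lift p).
Proof.
move=> pD; split; last by rewrite hyp_lift_norm // ltrN10.
by rewrite /hyp_lift scale3E /= mulr1 invr_gt0 disk_sqrt_gt0.
Qed.

Lemma mink_hyp_lift p q : in_disk p -> in_disk q -> hyp_dist_one p q ->
  mink (hyp_lift p) (hyp_lift q) = - cosh1 R.
Proof.
move=> pD qD <-; rewrite sqrtrM ?subr_ge0 ?ltW // minkZl minkZr mink_lift.
rewrite -/(disk_sqrt p) -/(disk_sqrt q).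
by field; rewrite !gt_eqF ?disk_sqrt_gt0.
Qed.

Lemma klein_lift X : X.1.1 != 0 -> X.1.1 *: Defs.lift (klein X) = X.
Proof.
by case: X => [[x0 x1] x2] /= x0_neq0; rewrite scale3E /=; congr (_, _, _); field.
Qed.

Lemma mink_klein X s : X.1.1 != 0 -> mink X s = X.1.1 * mink (Defs.lift (klein X)) s.
Proof. by move=> x0_neq0; rewrite -minkZl klein_lift. Qed.

Lemma klein_hyp_lift p : in_disk p -> klein (hyp_lift p) = p.
Proof.
move=> pD; have s_gt0 := disk_sqrt_gt0 pD.
rewrite /klein /hyp_lift scale3E /= mulr1 [RHS]surjective_pairing.
by congr (_, _); field; rewrite gt_eqF.
Qed.

Lemma in_disk_klein X : future_timelike X -> in_disk (klein X).
Proof.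
case: X => [[x0 x1] x2] [/= x0_gt0]; rewrite /mink /in_disk /sqn /= => xX.
rewrite !expr_div_n -mulrDl ltr_pdivrMr ?exprn_gt0 // mul1r !expr2; lra.
Qed.

Lemma klein_add X Y : 0 < X.1.1 -> 0 < Y.1.1 -> exists l : R,
  [/\ 0 <= l <= 1, (X + Y).1.1 * l = X.1.1, (X + Y).1.1 * (1 - l) = Y.1.1
     & klein (X + Y) = lin (klein Y) (klein X) l].
Proof.
case: X Y => [[x0 x1] x2] [[y0 y1] y2] /= x0_gt0 y0_gt0.
have s_gt0 : 0 < x0 + y0 by rewrite addr_gt0.
exists (x0 / (x0 + y0)); split.
- apply/andP; split; first by apply: divr_ge0; exact: ltW.
  by rewrite ler_pdivrMr // mul1r lerDl; exact: ltW.
- by rewrite mulrC divfK // gt_eqF.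
- by field; rewrite gt_eqF.
- by rewrite /klein /lin /=; congr (_, _); field; rewrite !gt_eqF.
Qed.

End KleinModel.

Section SupportPlanes.
Variable R : realType.
Implicit Types (p q x y : R * R) (s : R * R * R).

Definition minorizes (f : R * R -> R) s :=
  forall xi, in_disk xi -> mink (Defs.lift xi) s <= f xi.

(* [Sigma false phi p] is convertible to [supports (phi_minus phi) p]. *)
Definition supports (f : R * R -> R) p s :=
  minorizes f s /\ mink (Defs.lift p) s = f p.

Variables (f g : R * R -> R) (W : R).
Hypothesis f_le_g : forall xi, in_disk xi -> f xi <= g xi.
Hypothesis g_concave : forall x y l, in_disk x -> in_disk y -> 0 <= l <= 1 ->
  (1 - l) * g x + l * g y <= g (lin x y l).
Hypothesis gap_le : forall xi, in_disk xi -> g xi - f xi <= W * disk_sqrt xi.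

(* Splitting hyp_lift p = X + Y in the future cone writes p as a convex
   combination of klein X and klein Y; concavity of g and the gap bound
   at p then transfer the contact of s1 at p to a lower bound at klein X. *)
Lemma support_gap_bound p s1 s2 X :
  in_disk p -> supports f p s1 -> minorizes f s2 ->
  future_timelike X -> future_timelike (hyp_lift p - X) ->
  - W <= mink X (s1 - s2).
Proof.
move=> pD [s1_le s1_p] s2_le fX fY.
set P := hyp_lift p in fY; set Y := P - X in fY.
have [X0 _] := fX; have [Y0 _] := fY.
have PXY : P = X + Y by rewrite /Y addrC subrK.
have P0_gt0 : 0 < P.1.1 by rewrite PXY addr_gt0.
have P0_sd : P.1.1 * disk_sqrt p = 1.
  by rewrite /P /hyp_lift scale3E /= mulr1 mulVf // gt_eqF ?disk_sqrt_gt0.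
have [l [l01 P0_l P0_1l]] := klein_add X0 Y0; rewrite -PXY in P0_l P0_1l *.
rewrite /P klein_hyp_lift // -/P => p_lin.
set x := klein X in p_lin; set y := klein Y in p_lin.
have xD : in_disk x := in_disk_klein fX.
have yD : in_disk y := in_disk_klein fY.
have mPs1 : mink P s1 = P.1.1 * f p.
  by rewrite mink_klein ?gt_eqF // /P klein_hyp_lift // s1_p.
have mYs1 : mink Y s1 <= Y.1.1 * g y.
  rewrite mink_klein ?gt_eqF // ler_pM2l //.
  exact: le_trans (s1_le _ yD) (f_le_g yD).
have mXs2 : mink X s2 <= X.1.1 * g x.
  rewrite mink_klein ?gt_eqF // ler_pM2l //.
  exact: le_trans (s2_le _ xD) (f_le_g xD).
have gp : Y.1.1 * g y + X.1.1 * g x <= P.1.1 * g p.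
  have := ler_wpM2l (ltW P0_gt0) (g_concave yD xD l01).
  by rewrite -p_lin mulrDr !mulrA P0_1l P0_l.
have fp : P.1.1 * g p - W <= P.1.1 * f p.
  have := gap_le pD; rewrite -(ler_pM2l P0_gt0).
  by rewrite mulrCA P0_sd mulr1; lra.
have -> : mink X (s1 - s2) = mink P s1 - mink Y s1 - mink X s2.
  by rewrite PXY !minkE; ring.
lra.
Qed.

Lemma support_dist_bound p q s1 s2 :
  0 <= W -> in_disk p -> in_disk q -> hyp_dist_one p q ->
  supports f p s1 -> supports f q s2 ->
  Num.sqrt (mink (s1 - s2) (s1 - s2)) <= 43/6 * W.
Proof.
move=> W0 pD qD pq s1_p s2_q.
apply: (mink_sqrt_le_of_cone_bounds W0 (hyp_lift_future pD) (hyp_lift_future qD)).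
- exact: hyp_lift_norm.
- exact: hyp_lift_norm.
- by rewrite mink_hyp_lift // lerN2 cosh1_le.
- by move=> X; apply: support_gap_bound s2_q.1.
- move=> X fX fY; have := support_gap_bound qD s2_q s1_p.1 fX fY.
  by rewrite !minkE; lra.
Qed.

End SupportPlanes.

Section AffineOnDisk.
Variable R : realType.

Lemma aff_const (c : R) (z : R * R) : aff c 0 0 z = c.
Proof. by rewrite /aff !mul0r !addr0. Qed.

Lemma dot_le_sqrt (b1 b2 e1 e2 : R) :
  b1 * e1 + b2 * e2 <= Num.sqrt (b1 ^+ 2 + b2 ^+ 2) * Num.sqrt (e1 ^+ 2 + e2 ^+ 2).
Proof.
rewrite -sqrtrM ?addr_ge0 ?sqr_ge0 //.
have [dot_le0|dot_gt0] := lerP (b1 * e1 + b2 * e2) 0.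
  exact: le_trans dot_le0 (sqrtr_ge0 _).
rewrite -(ger0_norm (ltW dot_gt0)) -sqrtr_sqr ler_sqrt ?mulr_ge0 ?addr_ge0 ?sqr_ge0 //.
by have := sqr_ge0 (b1 * e2 - b2 * e1); rewrite !expr2; nra.
Qed.

Lemma aff_le_disk (c b1 b2 : R) (eta : R * R) :
  sqn eta <= 1 -> aff c b1 b2 eta <= c + Num.sqrt (b1 ^+ 2 + b2 ^+ 2).
Proof.
move=> eta_le1; rewrite /aff -addrA lerD2l.
apply: le_trans (dot_le_sqrt _ _ _ _) _.
rewrite -[X in _ <= X]mulr1 ler_wpM2l ?sqrtr_ge0 //.
by rewrite -sqrtr1 ler_sqrt.
Qed.

Lemma aff_circle_max (c b1 b2 : R) :
  exists2 z, on_circle z & aff c b1 b2 z = c + Num.sqrt (b1 ^+ 2 + b2 ^+ 2).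
Proof.
set r := Num.sqrt _.
have rr : r ^+ 2 = b1 ^+ 2 + b2 ^+ 2 by rewrite sqr_sqrtr // addr_ge0 ?sqr_ge0.
have [r0|r_neq0] := eqVneq r 0.
  have [b10 b20] : b1 = 0 /\ b2 = 0.
    by move: rr; rewrite r0 expr0n /= => /eqP; rewrite eq_sym paddr_eq0 ?sqr_ge0 //
      => /andP[]; rewrite !sqrf_eq0 => /eqP-> /eqP->.
  exists (1, 0); first by rewrite /on_circle /sqn /= expr1n expr0n addr0.
  by rewrite /aff r0 b10 b20 /=; ring.
exists (b1 / r, b2 / r).
  by rewrite /on_circle /sqn /= !expr_div_n -mulrDl -rr divff // expf_neq0.
rewrite /aff /= -addrA; congr (_ + _).
by apply: (mulIf r_neq0); rewrite mulrDl !mulrA !divfK // -!expr2 -rr expr2.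
Qed.

Lemma aff_le_of_circle (c b1 b2 c' b1' b2' : R) (eta : R * R) :
  (forall z, on_circle z -> aff c b1 b2 z <= aff c' b1' b2' z) ->
  sqn eta <= 1 -> aff c b1 b2 eta <= aff c' b1' b2' eta.
Proof.
move=> le_circle eta_le1.
have affB z : aff c b1 b2 z - aff c' b1' b2' z = aff (c - c') (b1 - b1') (b2 - b2') z.
  by rewrite /aff; ring.
have [z z_circle z_max] := aff_circle_max (c - c') (b1 - b1') (b2 - b2').
rewrite -subr_le0 affB; apply: le_trans (aff_le_disk _ _ _ eta_le1) _.
by rewrite -z_max -affB subr_le0 le_circle.
Qed.

End AffineOnDisk.

Section AffineEnvelopes.
Variable R : realType.
Implicit Types (phi : R * R -> R) (eta x y : R * R).

Lemma phi_plus_opp phi eta : phi_plus phi eta = - phi_minus (fun z => - phi z) eta.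
Proof.
rewrite /phi_plus /inf /phi_minus; congr (- sup _).
apply/seteqP; split => y.
  move=> [_ [c [b1 [b2 [phi_le ->]]]] <-].
  exists (- c), (- b1), (- b2); split; last by rewrite /aff; ring.
  by move=> z /phi_le; rewrite /aff; lra.
move=> [c [b1 [b2 [phi_ge ->]]]].
exists (aff (- c) (- b1) (- b2) eta); last by rewrite /aff; ring.
exists (- c), (- b1), (- b2); split => // z /phi_ge; rewrite /aff; lra.
Qed.

Variables (phi : R * R -> R) (B : R).
Hypothesis phi_bound : forall z, on_circle z -> `|phi z| <= B.

Lemma const_minorant z : on_circle z -> aff (- B) 0 0 z <= phi z.
Proof. by move=> /phi_bound; rewrite aff_const ler_norml => /andP[]. Qed.

Lemma const_majorant z : on_circle z -> phi z <= aff B 0 0 z.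
Proof. by move=> /phi_bound; rewrite aff_const ler_norml => /andP[]. Qed.

Lemma phi_minus_ge c b1 b2 eta : sqn eta <= 1 ->
  (forall z, on_circle z -> aff c b1 b2 z <= phi z) ->
  aff c b1 b2 eta <= phi_minus phi eta.
Proof.
move=> eta_le1 minor; apply: sup_upper_bound; last by exists c, b1, b2.
split; first by exists (aff (- B) 0 0 eta), (- B), 0, 0; split => //; exact: const_minorant.
exists B => _ [c' [b1' [b2' [minor' ->]]]]; rewrite -(aff_const B eta).
apply: aff_le_of_circle => // z z_circle.
exact: le_trans (minor' _ z_circle) (const_majorant z_circle).
Qed.

Lemma phi_minus_le a eta :
  (forall c b1 b2, (forall z, on_circle z -> aff c b1 b2 z <= phi z) ->
     aff c b1 b2 eta <= a) ->
  phi_minus phi eta <= a.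
Proof.
move=> le_a; apply: ge_sup => [|_ [c [b1 [b2 [minor ->]]]]]; last exact: le_a.
by exists (aff (- B) 0 0 eta), (- B), 0, 0; split => //; exact: const_minorant.
Qed.

Lemma phi_minus_convex x y l : sqn x <= 1 -> sqn y <= 1 -> 0 <= l <= 1 ->
  phi_minus phi (lin x y l) <= (1 - l) * phi_minus phi x + l * phi_minus phi y.
Proof.
move=> x_le1 y_le1 /andP[l_ge0 l_le1].
apply: phi_minus_le => c b1 b2 minor.
have -> : aff c b1 b2 (lin x y l) = (1 - l) * aff c b1 b2 x + l * aff c b1 b2 y.
  by rewrite /aff /lin /=; ring.
by apply: lerD; apply: ler_wpM2l; rewrite ?subr_ge0 //; exact: phi_minus_ge.
Qed.

Lemma phi_minus_le_plus eta : sqn eta <= 1 -> phi_minus phi eta <= phi_plus phi eta.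
Proof.
move=> eta_le1; apply: lb_le_inf => [|_ [c' [b1' [b2' [major ->]]]]].
  by exists (aff B 0 0 eta), B, 0, 0; split => //; exact: const_majorant.
apply: phi_minus_le => c b1 b2 minor; apply: aff_le_of_circle => // z z_circle.
exact: le_trans (minor _ z_circle) (major _ z_circle).
Qed.

End AffineEnvelopes.

Lemma phi_plus_concave (R : realType) (phi : R * R -> R) (B : R) x y l :
  (forall z, on_circle z -> `|phi z| <= B) ->
  sqn x <= 1 -> sqn y <= 1 -> 0 <= l <= 1 ->
  (1 - l) * phi_plus phi x + l * phi_plus phi y <= phi_plus phi (lin x y l).
Proof.
move=> phi_bound x_le1 y_le1 l01; rewrite !phi_plus_opp.
have opp_bound z : on_circle z -> `|- phi z| <= B by rewrite normrN; exact: phi_bound.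
by have := phi_minus_convex opp_bound x_le1 y_le1 l01; lra.
Qed.

Section Compactness.
Variable R : realType.

Lemma sqn_continuous : continuous (@sqn R).
Proof.
have -> : @sqn R = fun v => v.1 * v.1 + v.2 * v.2.
  by apply: funext => v; rewrite /sqn !expr2.
move=> v; have v1 : (fun v : R * R => v.1) @ v --> v.1 by exact: cvg_fst.
have v2 : (fun v : R * R => v.2) @ v --> v.2 by exact: cvg_snd.
by apply: cvgD; apply: cvgM.
Qed.

Lemma aff_coeffs_continuous (z : R * R) :
  continuous (fun v : R * R * R => aff v.1.1 v.1.2 v.2 z).
Proof.
move=> v.
have v11 : (fun v : R * R * R => v.1.1) @ v --> v.1.1.
  by apply: (continuous_comp (f := fst) (g := fst)); exact: cvg_fst.
have v12 : (fun v : R * R * R => v.1.2) @ v --> v.1.2.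
  by apply: (continuous_comp (f := fst) (g := snd)); [exact: cvg_fst|exact: cvg_snd].
have v2 : (fun v : R * R * R => v.2) @ v --> v.2 by exact: cvg_snd.
by apply: cvgD; [apply: cvgD|]; rewrite //; apply: cvgMl.
Qed.

Lemma circle_compact : compact [set z : R * R | on_circle z].
Proof.
apply: (@subclosed_compact _ _ (`[(-1 : R), 1] `*` `[(-1 : R), 1])).
- have : closed (@sqn R @^-1` [set x | x = 1]).
    by apply: preimage_closed; [move=> x _; exact: sqn_continuous|exact: closed_eq].
  by [].
- by apply: compact_setX; exact: segment_compact.
- move=> [z1 z2]; rewrite /on_circle /sqn /= => z_circle.
  have := sqr_ge0 z1; have := sqr_ge0 z2; rewrite !expr2 in z_circle *.
  by split; rewrite /= in_itv /=; apply/andP; split; nra.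
Qed.

Lemma bounded_on_circle (phi : R * R -> R) :
  {within [set z | on_circle z], continuous phi} ->
  exists B, forall z, on_circle z -> `|phi z| <= B.
Proof.
move=> phi_cont.
have := compact_bounded (continuous_compact phi_cont circle_compact).
move=> [M [_ M_bound]]; exists (M + 1) => z z_circle.
by apply: (M_bound (M + 1)); [rewrite ltrDl|exists z].
Qed.

End Compactness.

Section SupportExistence.
Variables (R : realType) (phi : R * R -> R) (B : R).
Hypothesis phi_bound : forall z, on_circle z -> `|phi z| <= B.

(* An affine minorant that is not below -B at p has gradient of size at most
   2B / (1 - |p|): it is at most B on the circle and at least -B at p. *)
Lemma minorant_coeffs_bounded p : in_disk p ->
  exists M, forall c b1 b2, (forall z, on_circle z -> aff c b1 b2 z <= phi z) ->
    - B <= aff c b1 b2 p -> [/\ `|c| <= M, `|b1| <= M & `|b2| <= M].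
Proof.
move=> pD; set rho := Num.sqrt (sqn p).
have rho_ge0 : 0 <= rho := sqrtr_ge0 _.
have rho_lt1 : rho < 1 by rewrite -sqrtr1 ltr_sqrt.
exists (B + 2 * B / (1 - rho)) => c b1 b2 minor p_ge.
set r := Num.sqrt (b1 ^+ 2 + b2 ^+ 2).
have r_ge0 : 0 <= r := sqrtr_ge0 _.
have cr_le : c + r <= B.
  have [z z_circle <-] := aff_circle_max c b1 b2.
  rewrite -(aff_const B z); exact: le_trans (minor _ z_circle) (const_majorant phi_bound z_circle).
have cr_ge : - B <= c + r * rho.
  apply: le_trans p_ge _; rewrite /aff -addrA lerD2l.
  exact: dot_le_sqrt.
have r_le : r <= 2 * B / (1 - rho) by rewrite ler_pdivlMr ?subr_gt0 //; nra.
have b1_le : `|b1| <= r by rewrite -sqrtr_sqr ler_sqrt ?addr_ge0 ?sqr_ge0 // lerDl sqr_ge0.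
have b2_le : `|b2| <= r by rewrite -sqrtr_sqr ler_sqrt ?addr_ge0 ?sqr_ge0 // lerDr sqr_ge0.
have rr_le : r * rho <= r by rewrite -[X in _ <= X]mulr1 ler_wpM2l // ltW.
have B_ge0 : 0 <= B by have := sqr_ge0 rho; nra.
split.
- by rewrite ler_norml; apply/andP; split; nra.
- by apply: le_trans b1_le _; lra.
- by apply: le_trans b2_le _; lra.
Qed.

(* s is read off a maximiser of the value at p over the compact set of affine
   minorants whose value at p is at least -B. *)
Lemma phi_minus_supported p : in_disk p -> exists s, supports (phi_minus phi) p s.
Proof.
move=> pD; have [M M_bound] := minorant_coeffs_bounded pD.
pose G z (v : R * R * R) := aff v.1.1 v.1.2 v.2 z.
pose K := [set v | (forall z, on_circle z -> G z v <= phi z) /\ - B <= G p v].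
have K_closed : closed K.
  have -> : K = \bigcap_(z in [set z | on_circle z]) (G z @^-1` [set x | x <= phi z])
               `&` (G p @^-1` [set x | - B <= x]).
    apply/seteqP; split => v /=.
      by move=> [v_le v_ge]; split => // z /v_le.
    by move=> [v_le v_ge]; split => // z /v_le.
  apply: closedI.
    apply: closed_bigI => z _; apply: preimage_closed; last exact: closed_le.
    by move=> x _; exact: aff_coeffs_continuous.
  apply: preimage_closed; last exact: closed_ge.
  by move=> x _; exact: aff_coeffs_continuous.
have K_compact : compact K.
  apply: (subclosed_compact K_closed (B := `[- M, M] `*` `[- M, M] `*` `[- M, M])).
    by apply: compact_setX; [apply: compact_setX|]; exact: segment_compact.
  move=> [[c b1] b2] [minor p_ge]; have [c_le b1_le b2_le] := M_bound _ _ _ minor p_ge.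
  by split; [split|]; rewrite /= in_itv /= -ler_norml.
have K_neq0 : K !=set0.
  exists (- B, 0, 0); split; first exact: const_minorant phi_bound.
  by rewrite /G aff_const.
have [v vK v_max] :=
  compact_EVT_max K_neq0 K_compact (continuous_subspaceT (@aff_coeffs_continuous R p)).
move: vK; rewrite inE => -[v_minor v_ge].
have G_mink xi : mink (Defs.lift xi) (- v.1.1, v.1.2, v.2) = G xi v.
  by rewrite /mink /G /aff /=; ring.
exists (- v.1.1, v.1.2, v.2); split.
  by move=> xi xiD; rewrite G_mink; apply: (phi_minus_ge phi_bound) => //; exact: ltW.
rewrite G_mink; apply/eqP; rewrite eq_le (phi_minus_ge phi_bound) ?(ltW pD) //=.
apply: (phi_minus_le phi_bound) => c b1 b2 minor.
have [p_lt|p_ge] := ltrP (aff c b1 b2 p) (- B); first lra.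
by apply: (v_max (c, b1, b2)); rewrite inE.
Qed.

End SupportExistence.

Section EarthquakeMeasure.
Variable R : realType.
Implicit Types (phi : R * R -> R) (p q r : R * R) (s : R * R * R).

Lemma Sigma_plusE phi r s :
  Sigma true phi r s <-> supports (phi_minus (fun z => - phi z)) r (- s).
Proof.
rewrite /Sigma /supports /minorizes /phi_pm.
have minkN xi : mink (Defs.lift xi) (- s) = - mink (Defs.lift xi) s by rewrite minkNr.
split=> -[s_ge s_r]; split.
- by move=> xi /s_ge; rewrite minkN phi_plus_opp lerNl.
- by rewrite minkN s_r phi_plus_opp opprK.
- by move=> xi /s_ge; rewrite minkN phi_plus_opp lerNl.
- by rewrite phi_plus_opp -s_r minkN opprK.
Qed.

Lemma Sigma_exists pm phi B p : (forall z, on_circle z -> `|phi z| <= B) ->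
  in_disk p -> exists s, Sigma pm phi p s.
Proof.
move=> phi_bound pD; case: pm; last exact: phi_minus_supported phi_bound p pD.
have opp_bound z : on_circle z -> `|- phi z| <= B by rewrite normrN; exact: phi_bound.
have [s s_supp] := phi_minus_supported opp_bound pD.
by exists (- s); apply/Sigma_plusE; rewrite opprK.
Qed.

Lemma eq_measure_le_step pm phi p q s1 s2 :
  Sigma pm phi p s1 -> Sigma pm phi q s2 ->
  (Defs.eq_measure pm phi (lin p q) <= (Num.sqrt (mink (sub3 s1 s2) (sub3 s1 s2)))%:E)%E.
Proof.
move=> s1_p s2_q; apply: ereal_inf_lbound.
exists 1%N, (fun i : nat => i%:R), (fun i : nat => if i == 0%N then s1 else s2).
split => //; last by rewrite big_ord1.
- by move=> i; rewrite ltnS leqn0 => /eqP -> /=; rewrite ltr01.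
- move=> [_|[_|//]] /=.
    by rewrite /lin subr0 !mul1r !mul0r !addr0 -surjective_pairing.
  by rewrite /lin subrr !mul1r !mul0r !add0r -surjective_pairing.
Qed.

Variables (phi : R * R -> R) (B W : R).
Hypothesis phi_bound : forall z, on_circle z -> `|phi z| <= B.
Hypothesis W_ge0 : 0 <= W.
Hypothesis gap_le :
  forall eta, in_disk eta -> phi_plus phi eta - phi_minus phi eta <= W * disk_sqrt eta.

Lemma phi_minus_support_dist p q s1 s2 :
  in_disk p -> in_disk q -> hyp_dist_one p q ->
  supports (phi_minus phi) p s1 -> supports (phi_minus phi) q s2 ->
  Num.sqrt (mink (s1 - s2) (s1 - s2)) <= 43/6 * W.
Proof.
apply: support_dist_bound W_ge0; last exact: gap_le.
- by move=> xi xiD; exact: phi_minus_le_plus phi_bound _ (ltW xiD).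
- by move=> x y l xD yD; exact: phi_plus_concave phi_bound (ltW xD) (ltW yD).
Qed.

End EarthquakeMeasure.

Lemma Sigma_dist_bound (R : realType) pm (phi : R * R -> R) (B W : R) p q s1 s2 :
  (forall z, on_circle z -> `|phi z| <= B) -> 0 <= W ->
  (forall eta, in_disk eta -> phi_plus phi eta - phi_minus phi eta <= W * disk_sqrt eta) ->
  in_disk p -> in_disk q -> hyp_dist_one p q ->
  Sigma pm phi p s1 -> Sigma pm phi q s2 ->
  Num.sqrt (mink (sub3 s1 s2) (sub3 s1 s2)) <= 43/6 * W.
Proof.
move=> phi_bound W_ge0 gap_le pD qD pq; rewrite sub3E; case: pm; last first.
  exact: (phi_minus_support_dist phi_bound W_ge0 gap_le pD qD pq).
move=> /Sigma_plusE s1_p /Sigma_plusE s2_q.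
have opp_bound z : on_circle z -> `|- phi z| <= B by rewrite normrN; exact: phi_bound.
have opp_gap eta : in_disk eta ->
    phi_plus (fun z => - phi z) eta - phi_minus (fun z => - phi z) eta <= W * disk_sqrt eta.
  rewrite phi_plus_opp (_ : (fun z => - - phi z) = phi); last by apply: funext => z; rewrite opprK.
  by move=> /gap_le; rewrite phi_plus_opp; lra.
have := phi_minus_support_dist opp_bound W_ge0 opp_gap pD qD pq s1_p s2_q.
by rewrite opprK addrC -opprB minkNl minkNr opprK.
Qed.

Lemma width_ge0 (R : realType) (phi : R * R -> R) (B : R) :
  (forall z, on_circle z -> `|phi z| <= B) -> (0 <= width phi)%E.
Proof.
move=> phi_bound; have zeroD : in_disk (0 : R, 0 : R).
  by rewrite /in_disk /sqn /= expr0n addr0 ltr01.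
apply: le_trans (ereal_sup_ubound _) => /=; last by exists (0, 0).
rewrite lee_fin divr_ge0 ?sqrtr_ge0 // subr_ge0.
exact: phi_minus_le_plus phi_bound _ (ltW zeroD).
Qed.

Lemma gap_le_width (R : realType) (phi : R * R -> R) (W : R) :
  width phi = W%:E -> forall eta, in_disk eta ->
  phi_plus phi eta - phi_minus phi eta <= W * disk_sqrt eta.
Proof.
move=> wW eta etaD; rewrite -ler_pdivrMr ?disk_sqrt_gt0 // -lee_fin -wW.
by apply: ereal_sup_ubound; exists eta.
Qed.

Theorem proposition6p3 (R : realType) (phi : R * R -> R) :
  {within [set z | on_circle z], continuous phi} ->
  (width phi < +oo)%E ->
  forall pm : bool,
    (thurston_norm pm phi
       <= ((2 * Num.sqrt 2 / (1 - tanh1 R)))%:E * width phi)%E.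
Proof.
move=> phi_cont width_fin pm.
have [B phi_bound] := bounded_on_circle phi_cont.
have := width_ge0 phi_bound; case wW : (width phi) width_fin => [W| |] // _.
rewrite lee_fin -EFinM => W_ge0.
apply: ge_ereal_sup => _ [p [q [pD qD pq _ ->]]].
have [s1 s1_p] := Sigma_exists pm phi_bound pD.
have [s2 s2_q] := Sigma_exists pm phi_bound qD.
apply: le_trans (eq_measure_le_step s1_p s2_q) _; rewrite lee_fin.
apply: le_trans (Sigma_dist_bound phi_bound W_ge0 (gap_le_width wW) pD qD pq s1_p s2_q) _.
exact: ler_wpM2r W_ge0 _ _ (thurston_const_ge R).
Qed.
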